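(* Let $\mathfrak{A}=(Q,\Sigma_I\times\Sigma_O,q_\iota,\delta,\Omega)$ be a deterministic parity automaton and let $k>0$. If Player~$O$ wins the game $\mathcal{G}_k$, then she wins the delay game $\Gamma_{2k-1}(L(\mathfrak{A}))$.
   Context: DPA: $\mathfrak{A}$ has finite state set $Q$, initial state $q_\iota$, transition function $\delta\colon Q\times(\Sigma_I\times\Sigma_O)\to Q$, coloring $\Omega\colon Q\to\mathbb{N}$; a run $q_0q_1\cdots$ ($q_0=q_\iota$, $q_{i+1}=\delta(q_i,\text{$i$-th letter})$) is accepting iff $\limsup_i\Omega(q_i)$ is even; $L(\mathfrak{A})$ is the set of words with accepting run. Delay game $\Gamma_m(L)$: in round $0$ Player~$I$ picks $a_0\cdots a_m\in\Sigma_I$, then Player~$O$ picks $b_0\in\Sigma_O$; in round $i>0$ Player~$I$ picks $a_{m+i}$, then Player~$O$ picks $b_i$. A strategy for $O$ is $\sigma\colon\Sigma_I^*\to\Sigma_O$, an outcome is consistent with it if $b_i=\sigma(a_0\cdots a_{i+m})$ for all $i$, it is winning if all consistent outcomes $\binom{a_0}{b_0}\binom{a_1}{b_1}\cdots$ lie in $L$, and $O$ wins if she has a winning strategy. The game $\mathcal{G}_k$: let $C=\Omega(Q)$. Define $\delta_\mathcal{T}((q,c),\binom{a}{b})=(q',\max\{c,\Omega(q')\})$ with $q'=\delta(q,\binom{a}{b})$, and $\delta_\mathcal{P}\colon 2^{Q\times C}\times\Sigma_I\to 2^{Q\times C}$ by $\delta_\mathcal{P}(S,a)=\bigcup_{(q,c)\in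 S}\bigcup_{b\in\Sigma_O}\{\delta_\mathcal{T}((q,c),\binom{a}{b})\}$, extended to words by $\delta^*_\mathcal{P}(S,\epsilon)=S$, $\delta^*_\mathcal{P}(S,wa)=\delta_\mathcal{P}(\delta^*_\mathcal{P}(S,w),a)$. For nonempty $D\subseteq Q\times C$ and $w\in\Sigma_I^*$ let $r^D_w\colon D\to 2^{Q\times C}$, $r^D_w(q,c)=\delta^*_\mathcal{P}(\{(q,\Omega(q))\},w)$. Let $\mathfrak{R}=\{r^D_w : w\in\Sigma_I^k,\ \emptyset\ne D\subseteq Q\times C\}$ (partial functions $Q\times C\rightharpoonup 2^{Q\times C}$ with domain $\mathrm{dom}(r)$). In $\mathcal{G}_k$, in each round $i\in\mathbb{N}$ Player~$I$ picks $r_i\in\mathfrak{R}$ and then Player~$O$ picks $(q_i,c_i)\in Q\times C$, subject to: $\mathrm{dom}(r_0)=\{(q_\iota,\Omega(q_\iota))\}$, $\mathrm{dom}(r_i)=r_{i-1}(q_{i-1},c_{i-1})$ for $i>0$, and $(q_i,c_i)\in\mathrm{dom}(r_i)$ for all $i$. A play is won by Player~$O$ iff $\limsup_i c_i$ is even. A strategy for $O$ maps each prefix $r_0(q_0,c_0)\cdots r_i$ to a legal $(q_i,c_i)$; she wins $\mathcal{G}_k$ if she has a strategy all of whose consistent plays she wins. *)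

From mathcomp Require Import all_boot.
Set Implicit Arguments. Unset Strict Implicit. Unset Printing Implicit Defensive.

Definition limsup_even (c : nat -> nat) : Prop :=
  exists m, ~~ odd m /\ (forall N, exists n, N <= n /\ c n = m) /\
            (exists N, forall n, N <= n -> c n <= m).

Section DPA.
Variables (Q SI SO : finType) (qi : Q) (delta : Q -> SI * SO -> Q)
          (Omega : Q -> nat).

Fixpoint run (w : nat -> SI * SO) (i : nat) : Q :=
  match i with 0 => qi | i'.+1 => delta (run w i') (w i') end.

Definition accepts (w : nat -> SI * SO) : Prop :=
  limsup_even (fun i => Omega (run w i)).

Definition prefix (a : nat -> SI) (n : nat) : seq SI := [seq a j | j <- iota 0 n].

Definition wins_delay_game (m : nat) : Prop :=
  exists sigma : seq SI -> SO,
    forall a : nat -> SI,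
      accepts (fun i => (a i, sigma (prefix a (i + m).+1))).

Definition col : finType := seq_sub (codom Omega).
Definition omc (q : Q) : col := @SeqSub _ _ (Omega q) (codom_f Omega q).
Definition maxc (c c' : col) : col := if ssval c <= ssval c' then c' else c.

Definition deltaT (p : Q * col) (ab : SI * SO) : Q * col :=
  let q' := delta p.1 ab in (q', maxc p.2 (omc q')).

Definition deltaP (S : {set Q * col}) (a : SI) : {set Q * col} :=
  [set deltaT p (a, b) | p in S, b in [set: SO]].

Definition deltaPs (S : {set Q * col}) (w : seq SI) : {set Q * col} :=
  foldl deltaP S w.

(* partial functions Q x C -> 2^(Q x C), None = undefined *)
Definition rtype : finType := {ffun Q * col -> option {set Q * col}}.

Definition dom (r : rtype) : {set Q * col} := [set p | r p != None].

Definition rfun (D : {set Q * col}) (w : seq SI) : rtype :=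
  [ffun p => if p \in D then Some (deltaPs [set (p.1, omc p.1)] w) else None].

Definition inR (k : nat) (r : rtype) : Prop :=
  exists (D : {set Q * col}) (w : seq SI), D != set0 /\ size w = k /\ r = rfun D w.

Definition history (rs : nat -> rtype) (ps : nat -> Q * col) (i : nat)
  : seq (rtype * (Q * col)) := [seq (rs j, ps j) | j <- iota 0 i].

(* Player O wins G_k: a strategy (history r_0 p_0 ... r_{i-1} p_{i-1}, current r_i)
   |-> p_i such that in every consistent play (i) her moves are legal as long as
   Player I's moves have been legal, and (ii) every infinite legal play is won. *)
Definition wins_Gk (k : nat) : Prop :=
  exists sigma : seq (rtype * (Q * col)) -> rtype -> Q * col,
    forall (rs : nat -> rtype) (ps : nat -> Q * col),
      (forall i, inR k (rs i)) ->
      dom (rs 0) = [set (qi, omc qi)] ->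
      (forall i, ps i = sigma (history rs ps i) (rs i)) ->
      (forall n, (forall i, i < n -> rs i (ps i) = Some (dom (rs i.+1))) ->
                 ps n \in dom (rs n)) /\
      ((forall i, rs i (ps i) = Some (dom (rs i.+1))) ->
       limsup_even (fun i => ssval (ps i).2)).

End DPA.

From Pilot Require Import Defs.
From mathcomp Require Import all_boot zify.
Set Implicit Arguments. Unset Strict Implicit. Unset Printing Implicit Defensive.

(* Player O replays a winning play of G_k.  The input is cut into blocks of
   length k; Player I's j-th move in G_k is r^{D_j}_w for the j-th block w, and
   the answer (q_{j+1}, c_{j+1}) of O's strategy is reachable from
   (q_j, Omega q_j) along w by some output word, which O plays on block j.
   Choosing it requires block j+1 to be known, whence the lookahead 2k-1.  The
   resulting run is in q_j at position j*k, and c_{j+1} is its largest colour on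
   positions j*k .. (j+1)*k, so its colours and the c_j have the same limsup. *)

Lemma bigmax_seq_attained (I : eqType) (r : seq I) (F : I -> nat) :
  r != [::] -> exists2 i, i \in r & \max_(j <- r) F j = F i.
Proof.
elim: r => [//|h t IH] _; rewrite big_cons.
have [-> | /IH [i it ->]] := eqVneq t [::].
  by exists h; rewrite ?big_nil ?maxn0 ?mem_head.
by case: leqP => _; [exists i; rewrite ?inE ?it ?orbT | exists h; rewrite ?mem_head].
Qed.

Lemma bigmax_nat_attained m n (F : nat -> nat) :
  m < n -> exists2 t, m <= t < n & \max_(m <= i < n) F i = F t.
Proof.
move=> lt_mn; have [|t] := @bigmax_seq_attained _ (index_iota m n) F.
  by rewrite -size_eq0 size_iota subn_eq0 -ltnNge.
by rewrite mem_index_iota; exists t.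
Qed.

Lemma eq_limsup_even (c c' : nat -> nat) :
  c =1 c' -> limsup_even c -> limsup_even c'.
Proof.
move=> eq_c [m [even_m [often [N bounded]]]]; exists m; split=> //; split.
  by move=> N0; have [n [le_n cn]] := often N0; exists n; rewrite -eq_c.
by exists N => n le_Nn; rewrite -eq_c; apply: bounded.
Qed.

Lemma limsup_even_shift (d : nat -> nat) :
  limsup_even d -> limsup_even (fun j => d j.+1).
Proof.
move=> [m [even_m [often [N bounded]]]]; exists m; split=> //; split.
  move=> N0; have [n [le_n dn]] := often N0.+1.
  by exists n.-1; rewrite prednK //; [split; lia | lia].
by exists N => n le_Nn; apply: bounded; lia.
Qed.

Lemma limsup_even_blockmax (c : nat -> nat) k : 0 < k ->
  limsup_even (fun j => \max_(j * k <= t < j * k + k.+1) c t) -> limsup_even c.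
Proof.
move=> k_gt0 [m [even_m [often [N bounded]]]]; exists m; split=> //; split.
  move=> N0; have [j [le_N0j max_j]] := often N0.
  have [|t /andP [le_jk_t _] ct] := @bigmax_nat_attained (j * k) (j * k + k.+1) c.
    by rewrite addnS ltnS leq_addr.
  exists t; split; last by rewrite -ct.
  by apply: leq_trans le_jk_t; apply: leq_trans (leq_pmulr _ k_gt0).
exists (N * k) => t le_Nk_t.
have le_N_j : N <= t %/ k by rewrite leq_divRL.
apply: leq_trans (bounded _ le_N_j).
apply: (leq_bigmax_seq t) => //; rewrite mem_index_iota leq_divM /=.
by have := ltn_ceil t k_gt0; lia.
Qed.

Section DPA.
Variables (Q SI SO : finType) (qi : Q) (delta : Q -> SI * SO -> Q)
          (Omega : Q -> nat).

Notation C := (col Omega).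
Notation dT := (@deltaT Q SI SO delta Omega).
Notation dPs := (@deltaPs Q SI SO delta Omega).
Notation run := (run qi delta).

Lemma eq_run (W W' : nat -> SI * SO) : W =1 W' -> run W =1 run W'.
Proof. by move=> eq_W; elim=> [//|i IH] /=; rewrite IH eq_W. Qed.

Lemma maxcE (c c' : C) : ssval (maxc c c') = maxn (ssval c) (ssval c').
Proof. by rewrite /maxc; case: leqP => [/maxn_idPr | /ltnW/maxn_idPl]. Qed.

Lemma foldl_deltaT_run (W : nat -> SI * SO) s n (c : C) :
  let p := foldl dT (run W s, c) (map W (iota s n)) in
  p.1 = run W (s + n) /\
  ssval p.2 = maxn (ssval c) (\max_(s <= t < s + n) Omega (run W t.+1)).
Proof.
elim: n s c => [|n IH] s c /=; first by rewrite addn0 big_geq ?maxn0.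
have [-> ->] := IH s.+1 (maxc c (omc Omega (run W s.+1))).
by rewrite addSnnS maxcE -maxnA (@big_ltn _ _ _ s) // addnS ltnS leq_addr.
Qed.

Lemma foldl_deltaT_run_omc (W : nat -> SI * SO) s n :
  let p := foldl dT (run W s, omc Omega (run W s)) (map W (iota s n)) in
  p.1 = run W (s + n) /\ ssval p.2 = \max_(s <= t < (s + n).+1) Omega (run W t).
Proof.
rewrite /=; have [-> ->] := foldl_deltaT_run W s n (omc Omega (run W s)).
by rewrite big_nat_recl ?leq_addr.
Qed.

Lemma mem_deltaPs (S : {set Q * C}) (w : seq SI) x :
  x \in dPs S w <->
  exists2 p, p \in S &
    exists2 bs : seq SO, size bs = size w & x = foldl dT p (zip w bs).
Proof.
elim: w S => [|a w IH] S /=.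
  split=> [xS | [p pS [bs /size0nil -> ->]]] //.
  by exists x => //; exists [::].
rewrite /deltaPs /= -/(deltaPs _ _ _) IH; split.
  case=> _ /imset2P [p b pS _ ->] [bs size_bs ->].
  by exists p => //; exists (b :: bs); rewrite /= ?size_bs.
case=> p pS [[|b bs] //= [size_bs] ->].
by exists (dT p (a, b)); [apply/imset2P; exists p b; rewrite ?inE | exists bs].
Qed.

Lemma dom_rfun (D : {set Q * C}) (w : seq SI) : dom (rfun delta D w) = D.
Proof. by apply/setP => x; rewrite !inE ffunE; case: (x \in D). Qed.

Definition winning_Gk_strategy (k : nat)
    (sigma : seq (rtype Omega * (Q * C)) -> rtype Omega -> Q * C) : Prop :=
  forall (rs : nat -> rtype Omega) (ps : nat -> Q * C),
    (forall i, inR delta k (rs i)) ->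
    dom (rs 0) = [set (qi, omc Omega qi)] ->
    (forall i, ps i = sigma (history rs ps i) (rs i)) ->
    (forall n, (forall i, i < n -> rs i (ps i) = Some (dom (rs i.+1))) ->
               ps n \in dom (rs n)) /\
    ((forall i, rs i (ps i) = Some (dom (rs i.+1))) ->
     limsup_even (fun i => ssval (ps i).2)).

Section Outputs.
Variable b0 : SO.

Definition outputs_reaching (q : Q) (p : Q * C) (w : seq SI) : seq SO :=
  if [pick bs : (size w).-tuple SO | foldl dT (q, omc Omega q) (zip w bs) == p]
    is Some bs then tval bs else nseq (size w) b0 (* junk: p is unreachable *).

Lemma outputs_reachingP q p w : p \in dPs [set (q, omc Omega q)] w ->
  size (outputs_reaching q p w) = size w /\
  foldl dT (q, omc Omega q) (zip w (outputs_reaching q p w)) = p.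
Proof.
move=> /mem_deltaPs [_ /set1P -> [bs size_bs reach_p]].
rewrite /outputs_reaching; case: pickP => [bs' /eqP -> | no_bs].
  by rewrite size_tuple.
by have := no_bs (Tuple (introT eqP size_bs)); rewrite /= -reach_p eqxx.
Qed.

Lemma deltaPs1_neq0 (p : Q * C) (w : seq SI) : dPs [set p] w != set0.
Proof.
apply/set0Pn; exists (foldl dT p (zip w (nseq (size w) b0))).
apply/mem_deltaPs; exists p; first exact: set11.
by exists (nseq (size w) b0); rewrite ?size_nseq.
Qed.

Section Strategy.
Variables (k : nat) (sigma : seq (rtype Omega * (Q * C)) -> rtype Omega -> Q * C).

Definition block (a : nat -> SI) (j : nat) : seq SI :=
  [seq a t | t <- iota (j * k) k].

Fixpoint play_state (a : nat -> SI) (n : nat) :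
    seq (rtype Omega * (Q * C)) * {set Q * C} :=
  if n is n'.+1 then
    let s := play_state a n' in
    let r := rfun delta s.2 (block a n') in
    let p := sigma s.1 r in
    (rcons s.1 (r, p), dPs [set (p.1, omc Omega p.1)] (block a n'))
  else ([::], [set (qi, omc Omega qi)]).

Definition moveI (a : nat -> SI) (n : nat) : rtype Omega :=
  rfun delta (play_state a n).2 (block a n).

Definition moveO (a : nat -> SI) (n : nat) : Q * C :=
  sigma (play_state a n).1 (moveI a n).

Definition out (a : nat -> SI) (i : nat) : SO :=
  let j := i %/ k in
  nth b0 (outputs_reaching (moveO a j).1 (moveO a j.+1) (block a j)) (i %% k).

(* A prefix a_0 .. a_(i+2k-1) of the input determines the output b_i. *)
Definition delay_strategy (s : seq SI) : SO :=
  if s is x :: _ then out (nth x s) (size s - 2 * k) else b0.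

Section Prefix.
Variables (N : nat) (a a' : nat -> SI).
Hypothesis eq_a : forall t, t < N -> a t = a' t.

Lemma eq_block j : j.+1 * k <= N -> block a j = block a' j.
Proof.
move=> le_N; apply/eq_in_map => t; rewrite mem_iota => /andP [_ lt_t].
by apply: eq_a; rewrite mulSn in le_N; lia.
Qed.

Lemma eq_play_state n : n * k <= N -> play_state a n = play_state a' n.
Proof.
elim: n => [//|n IH] le_N /=.
by rewrite IH ?eq_block //; rewrite mulSn in le_N; lia.
Qed.

Lemma eq_moveO n : n.+1 * k <= N -> moveO a n = moveO a' n.
Proof.
move=> le_N; rewrite /moveO /moveI eq_block // eq_play_state //.
by rewrite mulSn in le_N; lia.
Qed.

Lemma eq_out i : (i %/ k).+2 * k <= N -> out a i = out a' i.
Proof.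
move=> le_N; have le_N' : (i %/ k).+1 * k <= N by rewrite mulSn in le_N; lia.
by rewrite /out !eq_moveO ?eq_block.
Qed.

End Prefix.

Lemma delay_strategy_prefix (a : nat -> SI) i : 0 < k ->
  delay_strategy (Defs.prefix a (i + (2 * k - 1)).+1) = out a i.
Proof.
move=> k_gt0; have -> : (i + (2 * k - 1)).+1 = (i + 2 * k).-1.+1 by lia.
rewrite /Defs.prefix /= size_map size_iota.
have -> : (i + 2 * k).-1.+1 - 2 * k = i by lia.
apply: (@eq_out (i + 2 * k)); last by have := leq_divM i k; rewrite !mulSn; lia.
by case=> [|t] lt_t //=; rewrite (nth_map 0) ?size_iota ?nth_iota //; lia.
Qed.

Definition delay_play (a : nat -> SI) (t : nat) : SI * SO := (a t, out a t).

Section Winning.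
Hypothesis sigma_wins : winning_Gk_strategy k sigma.

Lemma history_moves a n : history (moveI a) (moveO a) n = (play_state a n).1.
Proof.
elim: n => [//|n IH].
by rewrite /history -addn1 iotaD map_cat -/(history _ _ _) IH /= cats1 add0n addn1.
Qed.

Lemma inR_moveI a n : inR delta k (moveI a n).
Proof.
exists (play_state a n).2, (block a n).
split=> //; last by rewrite size_map size_iota.
case: n => [|n] /=; first by apply/set0Pn; exists (qi, omc Omega qi); rewrite inE.
exact: deltaPs1_neq0.
Qed.

Let sigma_wins_play a := sigma_wins (inR_moveI a) (dom_rfun _ _)
  (fun i => congr2 sigma (esym (history_moves a i)) erefl).

Lemma moveI_chain a i : moveO a i \in (play_state a i).2 ->
  moveI a i (moveO a i) = Some (dom (moveI a i.+1)).
Proof. by rewrite /moveI dom_rfun ffunE => ->. Qed.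

Lemma moveO_legal a n : moveO a n \in (play_state a n).2.
Proof.
have [legal _] := sigma_wins_play a.
elim/ltn_ind: n => n IH; rewrite -[(play_state a n).2](dom_rfun _ (block a n)).
by apply: legal => i lt_in; apply/moveI_chain/IH.
Qed.

Lemma moveO_limsup a : limsup_even (fun i => ssval (moveO a i).2).
Proof.
have [_ won] := sigma_wins_play a.
by apply: won => i; apply/moveI_chain/moveO_legal.
Qed.

Hypothesis k_gt0 : 0 < k.

Lemma zip_block_outputs a j :
  zip (block a j) (outputs_reaching (moveO a j).1 (moveO a j.+1) (block a j)) =
  map (delay_play a) (iota (j * k) k).
Proof.
have [size_out _] := outputs_reachingP (moveO_legal a j.+1).
rewrite /block size_map size_iota in size_out *.
apply: (@eq_from_nth _ (a 0, b0)) => [|x];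
  rewrite size_zip size_out !size_map size_iota minnn //.
move=> lt_xk; rewrite nth_zip ?size_out ?size_map ?size_iota //.
rewrite !(nth_map 0) ?size_iota // nth_iota // /delay_play /out.
by rewrite divnMDl // divn_small // addn0 modnMDl modn_small.
Qed.

Lemma moveO_succ a j :
  moveO a j.+1 = foldl dT ((moveO a j).1, omc Omega (moveO a j).1)
                           (map (delay_play a) (iota (j * k) k)).
Proof.
by have [_ <-] := outputs_reachingP (moveO_legal a j.+1); rewrite zip_block_outputs.
Qed.

Lemma moveO_run a j : (moveO a j).1 = run (delay_play a) (j * k).
Proof.
elim: j => [|j IH]; first by have := moveO_legal a 0; rewrite inE => /eqP ->.
have [run_end _] := foldl_deltaT_run_omc (delay_play a) (j * k) k.
by rewrite moveO_succ IH run_end mulSnr.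
Qed.

Lemma moveO_color a j : ssval (moveO a j.+1).2 =
  \max_(j * k <= t < j * k + k.+1) Omega (run (delay_play a) t).
Proof.
have [_ max_end] := foldl_deltaT_run_omc (delay_play a) (j * k) k.
by rewrite moveO_succ moveO_run max_end addnS.
Qed.

End Winning.
End Strategy.
End Outputs.
End DPA.

Theorem mainTheorem3 (Q SI SO : finType) (qi : Q) (delta : Q -> SI * SO -> Q)
    (Omega : Q -> nat) (k : nat) :
  0 < #|SO| -> 0 < k ->
  wins_Gk qi delta Omega k ->
  wins_delay_game qi delta Omega (2 * k - 1).
Proof.
move=> /card_gt0P [b0 _] k_gt0 [sigma sigma_wins].
exists (delay_strategy qi delta b0 k sigma) => a.
have play_eq : (fun i => (a i, delay_strategy qi delta b0 k sigma
                                 (Defs.prefix a (i + (2 * k - 1)).+1)))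
               =1 delay_play qi delta b0 k sigma a.
  by move=> i; rewrite delay_strategy_prefix.
apply: (eq_limsup_even (fun t => congr1 Omega (esym (eq_run qi delta play_eq t)))).
apply: (limsup_even_blockmax k_gt0).
apply: (eq_limsup_even (moveO_color b0 sigma_wins k_gt0 a)).
exact: limsup_even_shift (moveO_limsup b0 sigma_wins a).
Qed.
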